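(* Let $G$ be a nice graph of size $m$ and maximum degree $\Delta$. (1) If $x$ is the minimum label sum of a proper labelling of $G$, then $x \leq {\rm ML}^{\rm W}(G)+m \leq 3(m+\Delta x)$. (2) $\chi'_{\rm s}(G) \leq {\rm ME}^{\rm W}(G)+1 \leq 3(1+\Delta\chi'_{\rm s}(G))$. (3) If $x$ is the minimum vertex sum of a proper labelling of $G$, then $x \leq {\rm MV}^{\rm W}(G)+\Delta \leq 3\Delta(1+x)$.
   Context: All graphs are finite and simple. A walk of a graph $G$ is a sequence of vertices $u_0u_1\dots u_p$ with $u_tu_{t+1}\in E(G)$ for all $t$ (vertices and edges may repeat); its length is $p$. For a walk $W$ of $G$, $G+W$ is the multigraph on $V(G)$ whose edge multiset consists of $E(G)$ together with each edge added as many times as $W$ traverses it. A multigraph is locally irregular if no two adjacent vertices have the same degree; $W$ is irregularising if $G+W$ is locally irregular. A graph is nice if it is connected and not isomorphic to $K_2$. ${\rm ML}^{\rm W}(G)$ is the minimum length of an irregularising walk of $G$; ${\rm ME}^{\rm W}(G)$ is the minimum, over irregularising walks $W$, of the maximum number of times $W$ traverses an edge; ${\rm MV}^{\rm W}(G)$ is the minimum, over irregularising walks $W$, of the maximum over vertices $v$ of the number of edges of $W$ (with multiplicity) incident to $v$. A labelling of $G$ is a map $\ell:E(G)\to\{1,2,\dots\}$; for a vertex $u$, $\sigma_\ell(u)=\sum_{v\in N(u)}\ell(uv)$; $\ell$ is proper if $\sigma_\ell(u)\ne\sigma_\ell(v)$ for all $uv\in E(G)$. $\chi'_{\rm s}(G)$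 is the smallest $k$ such that $G$ has a proper labelling with labels in $\{1,\dots,k\}$. The label sum of $\ell$ is $\sum_{e\in E(G)}\ell(e)$; the vertex sum of $\ell$ is $\max_{u\in V(G)}\sigma_\ell(u)$; the minimum label sum (resp. minimum vertex sum) of a proper labelling of $G$ is the minimum of these quantities over proper labellings of $G$. *)

(* A simple graph: a symmetric irreflexive relation e on a finType T. *)
From mathcomp Require Import all_boot.
Set Implicit Arguments. Unset Strict Implicit. Unset Printing Implicit Defensive.

Section Defs.
Variables (T : finType) (e : rel T).

(* connected (and nonempty) and not isomorphic to K2 *)
Definition connected_graph : Prop := 0 < #|T| /\ forall x y : T, connect e x y.
Definition nice : Prop := connected_graph /\ #|T| <> 2.

Definition deg (v : T) : nat := #|[set w | e v w]|.
Definition maxdeg : nat := \max_(v : T) deg v.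

Definition is_edge (A : {set T}) : bool := [exists a, exists b, e a b && (A == [set a; b])].
Definition size_m : nat := #|[set A : {set T} | is_edge A]|.

(* Walks: a walk u_0 u_1 ... u_p is given by u0 and s = [:: u_1; ...; u_p], with path e u0 s;
   its length is p = size s. *)
Definition steps (u0 : T) (s : seq T) : seq (T * T) := zip (u0 :: s) s.
Definition wdeg (u0 : T) (s : seq T) (v : T) : nat :=
  count (fun p : T * T => (p.1 == v) || (p.2 == v)) (steps u0 s).
Definition traversals (u0 : T) (s : seq T) (a b : T) : nat :=
  count (fun p : T * T => (p == (a, b)) || (p == (b, a))) (steps u0 s).

(* degree of v in the multigraph G + W is deg v + wdeg u0 s v *)
Definition irregularising (u0 : T) (s : seq T) : Prop :=
  path e u0 s /\ forall x y, e x y -> deg x + wdeg u0 s x <> deg y + wdeg u0 s y.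

Definition walk_maxedge (u0 : T) (s : seq T) : nat :=
  \max_(a : T) \max_(b | e a b) traversals u0 s a b.
Definition walk_maxvert (u0 : T) (s : seq T) : nat :=
  \max_(v : T) wdeg u0 s v.

Definition is_min_over_walks (f : T -> seq T -> nat) (n : nat) : Prop :=
  (exists u0 s, irregularising u0 s /\ f u0 s = n) /\
  (forall u0 s, irregularising u0 s -> n <= f u0 s).

Definition is_MLW := is_min_over_walks (fun _ s => size s).
Definition is_MEW := is_min_over_walks walk_maxedge.
Definition is_MVW := is_min_over_walks walk_maxvert.

(* Labellings: l : {set T} -> nat, only its values on edges matter; labels are >= 1. *)
Definition sigma (l : {set T} -> nat) (u : T) : nat := \sum_(v | e u v) l [set u; v].
Definition labelling (l : {set T} -> nat) : Prop := forall A, is_edge A -> 0 < l A.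
Definition proper (l : {set T} -> nat) : Prop :=
  labelling l /\ forall u v, e u v -> sigma l u <> sigma l v.
Definition label_sum (l : {set T} -> nat) : nat := \sum_(A : {set T} | is_edge A) l A.
Definition vertex_sum (l : {set T} -> nat) : nat := \max_(u : T) sigma l u.
Definition bounded_by (k : nat) (l : {set T} -> nat) : Prop := forall A, is_edge A -> l A <= k.

Definition is_chi_s (k : nat) : Prop :=
  (exists l, proper l /\ bounded_by k l) /\
  (forall k' l, proper l -> bounded_by k' l -> k <= k').
Definition is_min_label_sum (x : nat) : Prop :=
  (exists l, proper l /\ label_sum l = x) /\ (forall l, proper l -> x <= label_sum l).
Definition is_min_vertex_sum (x : nat) : Prop :=
  (exists l, proper l /\ vertex_sum l = x) /\ (forall l, proper l -> x <= vertex_sum l).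

End Defs.

From Pilot Require Import Defs.
From mathcomp Require Import all_boot zify.
From Stdlib Require Import Classical Wf_nat.
Set Implicit Arguments. Unset Strict Implicit. Unset Printing Implicit Defensive.

(* A walk W of G gives the labelling l_W(ab) = 1 + (number of traversals of ab), with
   sigma_{l_W}(v) = d(v) + d_W(v); so W is irregularising iff l_W is proper, and
   label sum, largest label and vertex sum of l_W are bounded by |W| + m,
   ME(W) + 1 and MV(W) + Delta.  Conversely, in a connected graph, going back and
   forth along edges yields, for a proper labelling l, a walk W traversing every
   edge ab exactly 2 Delta l(ab) times.  Then d(v) + d_W(v) = d(v) + 2 Delta sigma_l(v)
   separates adjacent vertices since 1 <= d(v) <= Delta, and |W|, ME(W), MV(W) are
   2 Delta times the label sum, the largest label and the vertex sum of l. *)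

Lemma set2_eqE (T : finType) (x y a b : T) : x != y ->
  ([set x; y] == [set a; b]) = ((a, b) == (x, y)) || ((a, b) == (y, x)).
Proof.
move=> nxy; apply/eqP/idP => [E|]; last first.
  by case/orP=> /eqP[-> ->]; rewrite // setUC.
have /set2P[ax|ay] : a \in [set x; y] by rewrite E set21.
- have /set2P[yx|->] : y \in [set a; b] by rewrite -E set22.
  + by rewrite yx ax eqxx in nxy.
  + by rewrite ax eqxx.
- have /set2P[xy|->] : x \in [set a; b] by rewrite -E set21.
  + by rewrite xy ay eqxx in nxy.
  + by rewrite ay eqxx orbT.
Qed.

Lemma addn_mul_small_inj (K dx dy sx sy : nat) :
  0 < dx <= K -> 0 < dy <= K -> dx + K * sx = dy + K * sy -> sx = sy.
Proof.
move=> /andP[dx_gt0 dx_le] /andP[dy_gt0 dy_le] E.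
by case: (ltngtP sx sy) => // lt; have := leq_mul (leqnn K) lt; rewrite mulnS; lia.
Qed.

Section Walks.
Variables (T : finType) (e : rel T).
Hypotheses (e_sym : symmetric e) (e_irr : irreflexive e).
Implicit Types (u v w x y a b : T) (s : seq T) (A : {set T}) (l : {set T} -> nat).

Lemma steps_cat u s1 s2 : steps u (s1 ++ s2) = steps u s1 ++ steps (last u s1) s2.
Proof. by elim: s1 u => [|y s1 IH] u //=; rewrite /steps /= -/(steps y _) IH. Qed.

Lemma mem_steps u s x y : (x, y) \in steps u s -> (x \in u :: s) /\ (y \in s).
Proof.
elim: s u => [|z s IH] u //=; rewrite inE => /orP[/eqP[-> ->]|].
  by rewrite !mem_head.
by case/IH; rewrite !inE => -> ->; rewrite !orbT.
Qed.

Lemma neq_of_edge x y : e x y -> x != y.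
Proof. by apply: contraTneq => ->; rewrite e_irr. Qed.

Lemma is_edgeP A : reflect (exists x y, e x y /\ A = [set x; y]) (is_edge e A).
Proof.
apply: (iffP existsP) => [[x /existsP[y /andP[exy /eqP->]]]|[x [y [exy ->]]]].
  by exists x, y.
by exists x; apply/existsP; exists y; rewrite exy eqxx.
Qed.

Lemma is_edge2 x y : e x y -> is_edge e [set x; y].
Proof. by move=> exy; apply/is_edgeP; exists x, y. Qed.

(* The multiplicities of a walk, as a labelling, so that [sigma] and [label_sum] apply. *)
Definition edge_count u s A : nat :=
  count (fun p : T * T => [set p.1; p.2] == A) (steps u s).

Lemma traversals_edge_count u s a b :
  a != b -> traversals u s a b = edge_count u s [set a; b].
Proof. by move=> nab; apply: eq_count => -[x y] /=; rewrite [RHS]eq_sym set2_eqE. Qed.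

Lemma wdeg_sigma u s v : path e u s -> wdeg u s v = sigma e (edge_count u s) v.
Proof.
rewrite /sigma /wdeg /edge_count.
elim: s u => [|y s IH] u /=; first by rewrite big1.
case/andP=> euy /IH ->; rewrite big_split /=; congr (_ + _).
under eq_bigr do rewrite (set2_eqE _ _ (neq_of_edge euy)) !xpair_eqE.
have [<-|nuv] := eqVneq u; rewrite /=.
  under eq_bigr do rewrite (negbTE (neq_of_edge euy)) orbF.
  by rewrite (bigD1 y) //= eqxx big1 // => w /andP[_ /negbTE->].
have [<-|nyv] := eqVneq y; last by rewrite big1 // => w _; rewrite eq_sym (negbTE nyv).
rewrite (bigD1 u) /=; last by rewrite e_sym.
by rewrite eqxx big1 // => w /andP[_ /negbTE->].
Qed.

Lemma size_label_sum u s : path e u s -> size s = label_sum e (edge_count u s).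
Proof.
rewrite /label_sum /edge_count.
elim: s u => [|y s IH] u /=; first by rewrite big1.
case/andP=> euy /IH ->; rewrite big_split /= -add1n; congr (_ + _).
rewrite (bigD1 [set u; y]) ?is_edge2 //= eqxx big1 // => A /andP[_].
by rewrite eq_sym => /negbTE->.
Qed.

Lemma edge_count_gt0 u s a b : 0 < edge_count u s [set a; b] -> b \in u :: s.
Proof.
rewrite -has_count => /hasP[[x y] /mem_steps[xs ys] /eqP /= E].
have /set2P[->|->] : b \in [set x; y] by rewrite E set22.
  exact: xs.
by rewrite inE ys orbT.
Qed.

Lemma edge_count_detour u s a b : path e u s -> a \in u :: s -> e a b ->
  exists2 s', path e u s' &
    forall A, edge_count u s' A = edge_count u s A + 2 * ([set a; b] == A).
Proof.
move=> ps a_in eab; case/splitPl: a_in ps => s1 s2 la ps.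
exists (s1 ++ [:: b, a & s2]).
  by move: ps; rewrite !cat_path la /= eab (e_sym b) eab => /andP[-> ->].
move=> A; rewrite /edge_count !steps_cat !count_cat la /= -/(steps a s2) setUC; lia.
Qed.

Section PrescribedEdgeCounts.
Variables (c : {set T} -> nat) (u : T).
Hypothesis c_pos : forall A, is_edge e A -> 0 < c A.
Hypothesis e_conn : forall x y, connect e x y.

Definition count_deficit s : nat := \sum_(A | is_edge e A) (2 * c A - edge_count u s A).

(* Counts are kept even, so that a detour, which adds 2, never overshoots [2 * c A]. *)
Definition admissible s : Prop := path e u s /\
  forall A, is_edge e A -> 2 %| edge_count u s A /\ edge_count u s A <= 2 * c A.

Lemma admissible_detour s a b : admissible s -> a \in u :: s -> e a b ->
    edge_count u s [set a; b] < 2 * c [set a; b] ->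
  exists2 s', admissible s' & count_deficit s' < count_deficit s.
Proof.
move=> [ps adm_s] a_in eab lt_ab; have Eab := is_edge2 eab.
have [s' ps' count_s'] := edge_count_detour ps a_in eab.
have [even_ab _] := adm_s _ Eab.
exists s'; first split => // A EA.
  rewrite count_s'; have [even_A le_A] := adm_s A EA.
  by case: eqP => [<-|_]; split; lia.
have same_rest : \sum_(A | is_edge e A && (A != [set a; b])) (2 * c A - edge_count u s' A)
    = \sum_(A | is_edge e A && (A != [set a; b])) (2 * c A - edge_count u s A).
  by apply: eq_bigr => A /andP[_ nA]; rewrite count_s' eq_sym (negbTE nA) addn0.
rewrite /count_deficit (bigD1 _ Eab) [in X in _ < X](bigD1 _ Eab) /= same_rest.
by rewrite count_s' eqxx /=; lia.
Qed.

Lemma admissible_saturated s : admissible s ->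
    (forall a b, a \in u :: s -> e a b -> 2 * c [set a; b] <= edge_count u s [set a; b]) ->
  forall A, is_edge e A -> edge_count u s A = 2 * c A.
Proof.
move=> [_ adm_s] sat_s.
have walk_closed : closed e (mem (u :: s)).
  apply: (intro_closed (sym_connect_sym e_sym)) => a b eab a_in.
  apply: (@edge_count_gt0 _ _ a); apply: leq_trans (sat_s a b a_in eab).
  by rewrite muln_gt0 c_pos ?is_edge2.
have spans x : x \in u :: s by rewrite -(closed_connect walk_closed (e_conn u x)) mem_head.
move=> _ /is_edgeP[a [b [eab ->]]]; have [_ le_ab] := adm_s _ (is_edge2 eab).
by apply/eqP; rewrite eqn_leq le_ab sat_s ?spans.
Qed.

Lemma exists_walk_with_edge_counts :
  exists2 s, path e u s & forall A, is_edge e A -> edge_count u s A = 2 * c A.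
Proof.
have adm_nil : admissible [::] by split=> // A _; rewrite /edge_count /= dvdn0.
suff walk_from n s : count_deficit s < n -> admissible s ->
    exists2 s', path e u s' & forall A, is_edge e A -> edge_count u s' A = 2 * c A.
  exact: (walk_from _ [::] (ltnSn _) adm_nil).
elim: n s => // n IH s lt_n adm_s.
have [/existsP[[a b] /and3P[a_in eab lt_ab]]|no_gap] := boolP [exists p : T * T,
    [&& p.1 \in u :: s, e p.1 p.2 & edge_count u s [set p.1; p.2] < 2 * c [set p.1; p.2]]].
  have [s' adm_s' lt_s'] := admissible_detour adm_s a_in eab lt_ab.
  by apply: IH adm_s'; apply: leq_trans lt_s' _.
exists s; first exact: adm_s.1.
apply: admissible_saturated adm_s _ => a b a_in eab; rewrite leqNgt.
by apply: contra no_gap => lt_ab; apply/existsP; exists (a, b); rewrite /= a_in eab.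
Qed.

End PrescribedEdgeCounts.

Lemma ex_min_over_walks (f : T -> seq T -> nat) u s :
  irregularising e u s -> exists n, is_min_over_walks e f n.
Proof.
move=> irr_s; pose P n := exists u s, irregularising e u s /\ f u s = n.
have P_inh : exists n, P n by exists (f u s), u, s.
have [n [[Pn min_n] _]] :=
  dec_inh_nat_subset_has_unique_least_element P (fun n => classic (P n)) P_inh.
by exists n; split => // u' s' irr_s'; apply/leP/min_n; exists u', s'.
Qed.

Lemma deg_le_maxdeg v : deg e v <= maxdeg e.
Proof. exact: (leq_bigmax (F := deg e)). Qed.

Lemma deg_gt0 x y : e x y -> 0 < deg e x.
Proof. by move=> exy; apply/card_gt0P; exists y; rewrite inE. Qed.

Lemma deg_sum v : deg e v = \sum_(w | e v w) 1.
Proof. by rewrite /deg -sum1_card; apply: eq_bigl => w; rewrite inE. Qed.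

Lemma size_m_sum : size_m e = \sum_(A | is_edge e A) 1.
Proof. by rewrite /size_m -sum1_card; apply: eq_bigl => A; rewrite inE. Qed.

Definition walk_labelling u s A : nat := (edge_count u s A).+1.

Lemma sigma_walk_labelling u s v :
  path e u s -> sigma e (walk_labelling u s) v = deg e v + wdeg u s v.
Proof. by move=> ps; rewrite wdeg_sigma // deg_sum -big_split. Qed.

Lemma proper_walk_labelling u s :
  irregularising e u s -> Defs.proper e (walk_labelling u s).
Proof.
by move=> [ps irr_s]; split=> // x y exy; rewrite !sigma_walk_labelling //; apply: irr_s.
Qed.

Lemma label_sum_walk_labelling u s :
  path e u s -> label_sum e (walk_labelling u s) = size_m e + size s.
Proof. by move=> ps; rewrite (size_label_sum ps) size_m_sum -big_split. Qed.

Lemma edge_count_le_walk_maxedge u s a b :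
  e a b -> edge_count u s [set a; b] <= walk_maxedge e u s.
Proof.
move=> eab; rewrite -traversals_edge_count ?neq_of_edge //.
apply: leq_trans (leq_bigmax_cond (F := traversals u s a) b eab) _.
exact: (leq_bigmax (F := fun a => \max_(b | e a b) traversals u s a b)).
Qed.

Lemma walk_labelling_bounded u s :
  bounded_by e (walk_maxedge e u s + 1) (walk_labelling u s).
Proof.
move=> _ /is_edgeP[a [b [eab ->]]].
by rewrite /walk_labelling addn1 ltnS edge_count_le_walk_maxedge.
Qed.

Lemma vertex_sum_walk_labelling u s :
  path e u s -> vertex_sum e (walk_labelling u s) <= maxdeg e + walk_maxvert u s.
Proof.
move=> ps; apply/bigmax_leqP => v _; rewrite sigma_walk_labelling //.
by rewrite leq_add ?deg_le_maxdeg // (leq_bigmax (F := wdeg u s)).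
Qed.

Section ScaledWalk.
Variables (K : nat) (l : {set T} -> nat) (u : T) (s : seq T).
Hypothesis s_path : path e u s.
Hypothesis edge_count_s : forall A, is_edge e A -> edge_count u s A = K * l A.

Lemma wdeg_scaled v : wdeg u s v = K * sigma e l v.
Proof.
rewrite wdeg_sigma // /sigma big_distrr.
by apply: eq_bigr => w evw; rewrite edge_count_s ?is_edge2.
Qed.

Lemma size_scaled : size s = K * label_sum e l.
Proof.
rewrite (size_label_sum s_path) /label_sum big_distrr.
by apply: eq_bigr => A EA; rewrite edge_count_s.
Qed.

Lemma walk_maxedge_scaled k : bounded_by e k l -> walk_maxedge e u s <= K * k.
Proof.
move=> l_le; apply/bigmax_leqP => a _; apply/bigmax_leqP => b eab.
have Eab := is_edge2 eab.
by rewrite traversals_edge_count ?neq_of_edge // edge_count_s // leq_mul2l l_le ?orbT.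
Qed.

Lemma walk_maxvert_scaled : walk_maxvert u s <= K * vertex_sum e l.
Proof.
apply/bigmax_leqP => v _; rewrite wdeg_scaled leq_mul2l.
by rewrite (leq_bigmax (F := sigma e l)) orbT.
Qed.

Lemma irregularising_scaled :
  Defs.proper e l -> maxdeg e <= K -> irregularising e u s.
Proof.
move=> [_ l_proper] maxdeg_le; split=> // x y exy; rewrite !wdeg_scaled.
have deg_in z w : e z w -> 0 < deg e z <= K.
  by move=> ezw; rewrite (deg_gt0 ezw) (leq_trans (deg_le_maxdeg z)).
have eyx : e y x by rewrite e_sym.
by move/(addn_mul_small_inj (deg_in _ _ exy) (deg_in _ _ eyx)); apply: l_proper.
Qed.

End ScaledWalk.

Section ConnectedGraph.
Hypothesis G_conn : connected_graph e.

Lemma exists_scaled_walk l : Defs.proper e l ->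
  exists u s, irregularising e u s /\
    forall A, is_edge e A -> edge_count u s A = 2 * maxdeg e * l A.
Proof.
move=> l_proper; have [/card_gt0P[u _] e_conn] := G_conn.
have c_pos A : is_edge e A -> 0 < maxdeg e * l A.
  case/is_edgeP=> x [y [exy ->]]; rewrite muln_gt0 l_proper.1 ?is_edge2 // andbT.
  exact: leq_trans (deg_gt0 exy) (deg_le_maxdeg x).
have [s s_path count_s] := exists_walk_with_edge_counts u c_pos e_conn.
have count_s' A : is_edge e A -> edge_count u s A = 2 * maxdeg e * l A.
  by move=> EA; rewrite count_s // mulnA.
exists u, s; split=> //; apply: irregularising_scaled s_path count_s' l_proper _.
by rewrite leq_pmull.
Qed.

Lemma min_label_sum_MLW_bounds (x : nat) : is_min_label_sum e x ->
  exists L, is_MLW e L /\ x <= L + size_m e <= 3 * (size_m e + maxdeg e * x).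
Proof.
move=> [[l [l_proper <-]] min_l].
have [u [s [irr_s count_s]]] := exists_scaled_walk l_proper.
have [L min_L] := ex_min_over_walks (fun _ s => size s) irr_s.
exists L; split=> //; have [[u' [s' [irr_s' <-]]] L_le] := min_L.
have lower := min_l _ (proper_walk_labelling irr_s').
rewrite (label_sum_walk_labelling irr_s'.1) in lower.
have upper := L_le u s irr_s; rewrite /= (size_scaled irr_s.1 count_s) in upper.
apply/andP; split; lia.
Qed.

Lemma chi_s_MEW_bounds k : is_chi_s e k ->
  exists M, is_MEW e M /\ k <= M + 1 <= 3 * (1 + maxdeg e * k).
Proof.
move=> [[l [l_proper l_le]] min_k].
have [u [s [irr_s count_s]]] := exists_scaled_walk l_proper.
have [M min_M] := ex_min_over_walks (walk_maxedge e) irr_s.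
exists M; split=> //; have [[u' [s' [irr_s' <-]]] M_le] := min_M.
have lower := min_k _ _ (proper_walk_labelling irr_s') (walk_labelling_bounded u' s').
have upper := leq_trans (M_le u s irr_s) (walk_maxedge_scaled count_s l_le).
apply/andP; split; lia.
Qed.

Lemma min_vertex_sum_MVW_bounds (x : nat) : is_min_vertex_sum e x ->
  exists V, is_MVW e V /\ x <= V + maxdeg e <= 3 * maxdeg e * (1 + x).
Proof.
move=> [[l [l_proper <-]] min_l].
have [u [s [irr_s count_s]]] := exists_scaled_walk l_proper.
have [V min_V] := ex_min_over_walks (@walk_maxvert T) irr_s.
exists V; split=> //; have [[u' [s' [irr_s' <-]]] V_le] := min_V.
have lower := leq_trans (min_l _ (proper_walk_labelling irr_s'))
                        (vertex_sum_walk_labelling irr_s'.1).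
have upper := leq_trans (V_le u s irr_s) (walk_maxvert_scaled irr_s.1 count_s).
apply/andP; split; lia.
Qed.

End ConnectedGraph.
End Walks.

Theorem theorem4p3 (T : finType) (e : rel T)
    (e_sym : symmetric e) (e_irr : irreflexive e) (G_nice : nice e) :
  (forall x, is_min_label_sum e x ->
     exists L, is_MLW e L /\ x <= L + size_m e <= 3 * (size_m e + maxdeg e * x)) /\
  (forall k, is_chi_s e k ->
     exists M, is_MEW e M /\ k <= M + 1 <= 3 * (1 + maxdeg e * k)) /\
  (forall x, is_min_vertex_sum e x ->
     exists V, is_MVW e V /\ x <= V + maxdeg e <= 3 * maxdeg e * (1 + x)).
Proof.
have G_conn := G_nice.1.
split; [|split].
- exact: min_label_sum_MLW_bounds e_sym e_irr G_conn.
- exact: chi_s_MEW_bounds e_sym e_irr G_conn.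
- exact: min_vertex_sum_MVW_bounds e_sym e_irr G_conn.
Qed.
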